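(* Let $|X|=4$ and let $\sigma^+$ be a rooted binary metric species tree on $X$. Then the unrooted metric species tree $\sigma^-$ is identifiable from $\mathbb P_{\sigma^+}$: whenever $\sigma_1^+,\sigma_2^+$ are rooted binary metric species trees on $X$ with $\mathbb P_{\sigma_1^+}=\mathbb P_{\sigma_2^+}$, one has $\sigma_1^-=\sigma_2^-$. However, $\sigma^+$ is not identifiable from $\mathbb P_{\sigma^+}$: there exist rooted binary metric species trees $\sigma_1^+\ne\sigma_2^+$ on $X$ with $\mathbb P_{\sigma_1^+}=\mathbb P_{\sigma_2^+}$.
   Context: Let $X$ be a finite set of $n$ taxa. A rooted binary metric species tree on $X$ is a pair $\sigma^+=(\psi^+,\lambda^+)$. Here $\psi^+$ is a rooted binary tree topology with leaves bijectively labeled by $X$, and $\lambda^+$ gives strictly positive lengths, in coalescent units, to its $n-2$ internal edges. Pendant edge lengths are unspecified. Multispecies coalescent model, one lineage per taxon. One gene lineage starts at each leaf, and no coalescence occurs on pendant edges. Going backward in time, in each internal edge (population), the lineages entering from the child edges coalesce pairwise at rate 1 each (total rate $\binom{i}{2}$ with $i$ lineages, merging pair uniformly random) for a time equal to the edge length. Above the root, lineages coalesce in the same way until one remains. The resulting rooted gene tree, with its root forgotten, is an unrooted binary leaf-labeled topology. $\mathbb P_{\sigma^+}$ is the induced distribution on the set $\mathcal T_X$ of unrooted binary leaf-labeled topologies on $X$. The unrooted metric species tree $\sigma^-=(\psi^-,\lambda^-)$ is obtained by suppressing the root of $\sigma^+$: - If the root is incident to two internal edges, they merge into one internal edge whose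 length is the sum. - If the root is incident to a pendant edge, the merged edge is pendant and has no length. - Other internal edge lengths are kept. *)

From Stdlib Require Import Reals.
From Coquelicot Require Import Coquelicot.
From mathcomp Require Import all_boot.

Set Implicit Arguments.
Unset Strict Implicit.
Unset Printing Implicit Defensive.

Local Open Scope R_scope.
Section MSC.
Variable X : finType.

Definition sumR {T : Type} (s : seq T) (f : T -> R) : R :=
  foldr (fun x acc => Rplus (f x) acc) 0 s.

Definition b2R (b : bool) : R := if b then 1 else 0.

(* A rooted binary tree topology on X is encoded by its set of clusters
   (leaf sets below each node): X itself (the root), all singletons (leaves),
   pairwise compatible, and every non-leaf cluster is the disjoint union of two
   (nonempty) clusters of the hierarchy (its two children). *)
Definition rooted_binary (H : {set {set X}}) : Prop :=
  [/\ setT \in H,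
      (forall x : X, [set x] \in H),
      set0 \notin H,
      (forall A B, A \in H -> B \in H ->
          [|| A \subset B, B \subset A | [disjoint A & B]]) &
      (forall C, C \in H -> (1 < #|C|)%N ->
          exists A B, [/\ A \in H, B \in H, [disjoint A & B] & A :|: B = C])].

(* internal edges of the rooted tree: the edge above each non-root, non-leaf
   node, identified with the cluster of that node *)
Definition internal_edge (H : {set {set X}}) (C : {set X}) : bool :=
  [&& C \in H, (1 < #|C|)%N & C != setT].

(* rooted metric species tree: topology + lengths of internal edges
   (values of len on non-internal clusters are irrelevant) *)
Record rmtree := RMTree { rtop : {set {set X}} ; rlen : {set X} -> R }.

Definition valid_rmtree (s : rmtree) : Prop :=
  rooted_binary (rtop s) /\
  (forall C, internal_edge (rtop s) C -> (0 < rlen s C)).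

Definition rmtree_eq (s1 s2 : rmtree) : Prop :=
  rtop s1 = rtop s2 /\
  (forall C, internal_edge (rtop s1) C -> rlen s1 C = rlen s2 C).

(* a split A|X\A is encoded as the unordered pair [set A; ~: A] *)
Definition split_of (A : {set X}) : {set {set X}} := [set A; ~: A].

(* the nontrivial splits (both sides of size >= 2) displayed by a rooted
   hierarchy: this is its unrooted topology (root suppressed) *)
Definition unroot (G : {set {set X}}) : {set {set {set X}}} :=
  [set split_of A | A in G & (1 < #|A|)%N && (1 < #|~: A|)%N].

Definition internal_edges (H : {set {set X}}) : seq {set X} :=
  enum [set C | internal_edge H C].

(* length of an internal edge (split S) of the unrooted tree sigma^-:
   the sum of the lengths of the rooted internal edges inducing S (two edges
   are merged when the root is incident to two internal edges) *)
Definition ulen (s : rmtree) (S : {set {set X}}) : R :=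
  sumR (internal_edges (rtop s))
       (fun C => if split_of C == S then rlen s C else 0).

Definition unrooted_eq (s1 s2 : rmtree) : Prop :=
  unroot (rtop s1) = unroot (rtop s2) /\
  (forall S, S \in unroot (rtop s1) -> ulen s1 S = ulen s2 S).

(* state: (current gene lineages, each given by its leaf cluster;
           set of all gene-tree clusters formed so far) *)
Definition state := ({set {set X}} * {set {set X}})%type.

Definition lineages_in (s : state) (C : {set X}) : {set {set X}} :=
  [set A in s.1 | A \subset C].

Definition pairs_in (s : state) (C : {set X}) : seq {set {set X}} :=
  enum [set p : {set {set X}} | (#|p| == 2)%N && (p \subset lineages_in s C)].

Definition merge (s : state) (p : {set {set X}}) : state :=
  let U := \bigcup_(A in p) A in (U |: (s.1 :\: p), U |: s.2).

Definition rate (s : state) (C : {set X}) : R :=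
  INR 'C(#|lineages_in s C|, 2).

(* probability that, in population C run for time t starting from state s,
   the process ends in state s'.  Each pair coalesces at rate 1
   (first-step / backward integral equation); n is fuel (#|X| suffices). *)
Fixpoint ptrans (n : nat) (C : {set X}) (t : R) (s s' : state) : R :=
  match n with
  | 0 => (b2R (s == s') * exp (- rate s C * t))
  | n'.+1 =>
      (b2R (s == s') * exp (- rate s C * t) +
       sumR (pairs_in s C)
         (fun p => RInt (fun u => exp (- rate s C * u) *
                                  ptrans n' C (t - u) (merge s p) s') 0 t))
  end.

(* above the root: coalesce until one lineage remains; the merging pair is
   uniformly random at each step *)
Fixpoint proot (n : nat) (s s' : state) : R :=
  match n with
  | 0 => b2R (s == s')
  | n'.+1 =>
      if pairs_in s setT is [::] then b2R (s == s')
      else sumR (pairs_in s setT)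
             (fun p => (/ rate s setT * proot n' (merge s p) s'))
  end.

Definition all_states : seq state := enum [set: state].

(* populations processed children-before-parents (by increasing cluster
   size); then the root population *)
Fixpoint run (Es : seq {set X}) (len : {set X} -> R) (s sf : state) : R :=
  match Es with
  | [::] => proot #|X| s sf
  | C :: Es' => sumR all_states
                  (fun s' => (ptrans #|X| C (len C) s s' * run Es' len s' sf))
  end.

(* initial state: one lineage per taxon, no coalescence on pendant edges *)
Definition init_state : state :=
  ([set [set x] | x : X], [set [set x] | x : X]).

(* P_{sigma^+}(T): probability that the unrooted gene tree topology is T *)
Definition msc_prob (s : rmtree) (T : {set {set {set X}}}) : R :=
  let Es := sort (fun A B : {set X} => (#|A| <= #|B|)%N) (internal_edges (rtop s)) in
  sumR all_states
    (fun sf => (run Es (rlen s) init_state sf * b2R (unroot sf.2 == T))).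

End MSC.

From HB Require Import structures.
From Pilot Require Import Defs.
From Stdlib Require Import Reals Lra Lia.
From Coquelicot Require Import Coquelicot.
From mathcomp Require Import all_boot zify.

Set Implicit Arguments.
Unset Strict Implicit.
Unset Printing Implicit Defensive.

(* With four taxa the unrooted gene tree is decided by the first coalescence: once a
   cherry {a,b} has formed, the remaining lineages can only produce the quartet ab|cd.
   Running the populations children first, P(ab|cd) is therefore the probability that the
   first coalescence joins a pair inducing ab|cd.  A rooted species tree on four taxa is a
   caterpillar (internal clusters A, B with |A| = 2, |B| = 3) or balanced (internal
   clusters A and ~A); in both cases
     P(ab|cd) = exp(-L)/3 + (1 - exp(-L)) [ab|cd = A|~A],
   where L is the length of the internal edge of the unrooted species tree (len A, resp.
   len A + len ~A).  So P determines the split A|~A and L, while a balanced tree only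
   sees len A + len ~A: exchanging its two edge lengths changes the rooted tree but not P. *)

Local Open Scope R_scope.

Lemma continuous_exp_scal (c x : R) : continuous (fun u => exp (c * u)) x.
Proof. by apply: (@ex_derive_continuous R_AbsRing R_NormedModule); auto_derive. Qed.

Lemma ex_RInt_continuous_R (f : R -> R) a b : (forall x, continuous f x) -> ex_RInt f a b.
Proof. by move=> cf; apply: (@ex_RInt_continuous R_CompleteNormedModule) => x _. Qed.

Lemma continuous_mulR (f g : R -> R) x :
  continuous f x -> continuous g x -> continuous (fun u => f u * g u) x.
Proof. exact: (@continuous_mult R_UniformSpace R_AbsRing). Qed.

Lemma RInt_reflect (g : R -> R) a b : ex_RInt g a b ->
  RInt (fun u => g (a + b - u)) a b = RInt g a b.
Proof.
move=> ig.
have ig' : ex_RInt g (-1 * a + (a + b)) (-1 * b + (a + b)).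
  replace (-1 * a + (a + b)) with b by ring; replace (-1 * b + (a + b)) with a by ring.
  exact: ex_RInt_swap.
transitivity (opp (RInt (fun y => scal (-1) (g (-1 * y + (a + b)))) a b)).
  rewrite -(RInt_opp (V := R_CompleteNormedModule)); last exact: ex_RInt_comp_lin.
  apply: RInt_ext => x _; rewrite /scal /opp /= /mult /=.
  by replace (-1 * x + (a + b)) with (a + b - x) by ring; ring.
rewrite RInt_comp_lin //.
replace (-1 * a + (a + b)) with b by ring; replace (-1 * b + (a + b)) with a by ring.
by rewrite opp_RInt_swap //; apply: ex_RInt_swap.
Qed.

Lemma RInt_mulr (f : R -> R) a b c : ex_RInt f a b ->
  RInt (fun u => f u * c) a b = RInt f a b * c.
Proof.
move=> fi; rewrite Rmult_comm -[RHS]/(scal c (RInt f a b)) -RInt_scal //.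
by apply: RInt_ext => x _; rewrite /scal /= /mult /= Rmult_comm.
Qed.

Lemma RInt_mull (f : R -> R) a b c : ex_RInt f a b ->
  RInt (fun u => c * f u) a b = c * RInt f a b.
Proof. by move=> fi; rewrite -[RHS]/(scal c (RInt f a b)) -RInt_scal. Qed.

Section ExpConvolution.
Variables (P : R -> R) (r : R).
Hypothesis P_continuous : forall x, continuous P x.

Let weighted v := exp (r * v) * P v.

Let weighted_continuous x : continuous weighted x.
Proof. by apply: continuous_mulR; [apply: continuous_exp_scal | apply: P_continuous]. Qed.

Lemma RInt_exp_convolution t :
  RInt (fun u => exp (- r * u) * P (t - u)) 0 t = exp (- r * t) * RInt weighted 0 t.
Proof.
rewrite -RInt_mull; last exact: ex_RInt_continuous_R.
rewrite -(@RInt_reflect (fun v => exp (- r * t) * weighted v)); last first.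
  apply: ex_RInt_continuous_R => x.
  by apply: continuous_mulR; [apply: continuous_const | apply: weighted_continuous].
apply: RInt_ext => u _; rewrite /weighted Rplus_0_l -Rmult_assoc -exp_plus.
by f_equal; f_equal; ring.
Qed.

Lemma continuous_exp_convolution t :
  continuous (fun t => RInt (fun u => exp (- r * u) * P (t - u)) 0 t) t.
Proof.
apply: (continuous_ext (fun t => exp (- r * t) * RInt weighted 0 t)).
  by move=> x; rewrite RInt_exp_convolution.
apply: continuous_mulR; first exact: continuous_exp_scal.
apply: (continuous_RInt_1 weighted 0 t); apply: filter_forall => z.
exact/(@RInt_correct R_CompleteNormedModule)/ex_RInt_continuous_R.
Qed.

End ExpConvolution.

Lemma RInt_exp_const (r c t : R) : r <> 0 ->
  RInt (fun u => exp (- r * u) * c) 0 t = c * (1 - exp (- r * t)) / r.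
Proof.
move=> r0; apply: is_RInt_unique.
replace (c * (1 - exp (- r * t)) / r)
  with (minus (- c * exp (- r * t) / r) (- c * exp (- r * 0) / r)); last first.
  by rewrite /minus /plus /opp /= Rmult_0_r exp_0; field.
apply: (@is_RInt_derive R_CompleteNormedModule (fun u => - c * exp (- r * u) / r)) => x _.
- by auto_derive; [| field].
- by apply: (@ex_derive_continuous R_AbsRing R_NormedModule); auto_derive.
Qed.

HB.instance Definition _ := Monoid.isComLaw.Build R 0 Rplus
  (fun a b c => esym (Rplus_assoc a b c)) Rplus_comm Rplus_0_l.

Section SumR.
Variable T : Type.
Implicit Types (l : seq T) (f g : T -> R).

Lemma sumR_big l f : sumR l f = \big[Rplus/0]_(x <- l) f x.
Proof. by elim: l => [|x l IH] /=; rewrite ?big_nil ?big_cons ?IH. Qed.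

Lemma eq_sumR l f g : f =1 g -> sumR l f = sumR l g.
Proof. by move=> fg; elim: l => //= x l ->; rewrite fg. Qed.

Lemma sumRD l f g : sumR l (fun x => f x + g x) = sumR l f + sumR l g.
Proof. elim: l => /= [|x l ->]; lra. Qed.

Lemma mulR_sumr l c f : sumR l (fun x => c * f x) = c * sumR l f.
Proof. elim: l => /= [|x l ->]; lra. Qed.

Lemma mulR_suml l c f : sumR l (fun x => f x * c) = sumR l f * c.
Proof. elim: l => /= [|x l ->]; lra. Qed.

Lemma sumR_const l c : sumR l (fun _ => c) = INR (size l) * c.
Proof.
elim: l => [|x l IH]; first by rewrite /=; lra.
by rewrite -[size _]/(size l).+1 S_INR /= IH; lra.
Qed.

Lemma sumR_count l (P : pred T) : sumR l (fun x => b2R (P x)) = INR (count P l).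
Proof.
elim: l => [|x l IH]; first by rewrite /=; lra.
by rewrite -[count _ _]/(P x + count P l)%N plus_INR /= IH; case: (P x); rewrite /b2R /=; lra.
Qed.

Lemma sumR_map (U : Type) (h : U -> T) (m : seq U) f :
  sumR (map h m) f = sumR m (fun y => f (h y)).
Proof. by elim: m => //= y m ->. Qed.

Lemma ex_RInt_sumR l (F : T -> R -> R) a b :
  (forall x, ex_RInt (F x) a b) -> ex_RInt (fun u => sumR l (fun x => F x u)) a b.
Proof.
move=> iF; elim: l => /= [|x l IH].
- exact: (@ex_RInt_const R_CompleteNormedModule).
- exact: (@ex_RInt_plus R_CompleteNormedModule).
Qed.

Lemma RInt_sumR l (F : T -> R -> R) a b : (forall x, ex_RInt (F x) a b) ->
  RInt (fun u => sumR l (fun x => F x u)) a b = sumR l (fun x => RInt (F x) a b).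
Proof.
move=> iF; elim: l => /= [|x l <-].
- by rewrite (@RInt_const R_CompleteNormedModule) /scal /= /mult /=; lra.
- by rewrite (@RInt_plus R_CompleteNormedModule) //; apply: ex_RInt_sumR.
Qed.

Lemma continuous_sumR l (F : T -> R -> R) t :
  (forall x, continuous (F x) t) -> continuous (fun u => sumR l (fun x => F x u)) t.
Proof.
move=> cF; elim: l => /= [|x l IH]; first exact: continuous_const.
exact: (@continuous_plus R_UniformSpace R_AbsRing R_NormedModule).
Qed.

End SumR.

Lemma exchange_sumR (T U : Type) (l : seq T) (m : seq U) (F : T -> U -> R) :
  sumR l (fun x => sumR m (F x)) = sumR m (fun y => sumR l (fun x => F x y)).
Proof.
elim: l => /= [|x l ->]; first by elim: m => //= y m <-; lra.
by rewrite -sumRD.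
Qed.

Lemma eq_in_sumR (T : eqType) (l : seq T) (f g : T -> R) :
  {in l, f =1 g} -> sumR l f = sumR l g.
Proof. by rewrite !sumR_big => fg; apply: eq_big_seq. Qed.

Lemma sumR_pred1 (T : eqType) (l : seq T) a (f : T -> R) : uniq l -> a \in l ->
  sumR l (fun x => b2R (a == x) * f x) = f a.
Proof.
rewrite sumR_big => ul al; rewrite (bigD1_seq a) //= eqxx /b2R Rmult_1_l.
rewrite big1 => [|x /negbTE]; last by rewrite eq_sym => ->; lra.
lra.
Qed.

Lemma perm_sumR (T : eqType) (l1 l2 : seq T) (f : T -> R) :
  perm_eq l1 l2 -> sumR l1 f = sumR l2 f.
Proof. by rewrite !sumR_big; apply: perm_big. Qed.

Section CoalescentMeans.
Variable X : finType.
Implicit Types (s : state X) (C : {set X}) (h : state X -> R).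

Lemma all_statesP s : s \in all_states X.
Proof. by rewrite mem_enum in_setT. Qed.

Lemma all_states_uniq : uniq (all_states X).
Proof. exact: enum_uniq. Qed.

Lemma sumR_all_states_pred1 s (f : state X -> R) :
  sumR (all_states X) (fun s' => b2R (s == s') * f s') = f s.
Proof. exact: sumR_pred1 all_states_uniq (all_statesP s). Qed.

Lemma continuous_ptrans n C s s' t : continuous (fun t => ptrans n C t s s') t.
Proof.
have cexp s0 t0 : continuous (fun t => b2R (s0 == s') * exp (- rate s0 C * t)) t0.
  by apply: continuous_mulR; [apply: continuous_const | apply: continuous_exp_scal].
elim: n s t => [|n IH] s t /=; first exact: cexp.
apply: (@continuous_plus R_UniformSpace R_AbsRing R_NormedModule); first exact: cexp.
apply: continuous_sumR => p.
exact: (continuous_exp_convolution (P := fun x => ptrans n C x (Defs.merge s p) s')).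
Qed.

Lemma continuous_ptrans_convolution n C s s' c t x :
  continuous (fun u => exp (c * u) * ptrans n C (t - u) s s') x.
Proof.
apply: continuous_mulR; first exact: continuous_exp_scal.
apply: (continuous_comp (fun u => t - u) (fun x => ptrans n C x s s')).
  by apply: (@ex_derive_continuous R_AbsRing R_NormedModule); auto_derive.
exact: continuous_ptrans.
Qed.

Definition pop_mean n C t h s := sumR (all_states X) (fun s' => ptrans n C t s s' * h s').

Lemma pop_mean0 C t h s : pop_mean 0 C t h s = exp (- rate s C * t) * h s.
Proof.
rewrite /pop_mean -(sumR_all_states_pred1 s (fun s' => exp (- rate s C * t) * h s')).
by apply: eq_sumR => s' /=; rewrite Rmult_assoc.
Qed.

Lemma pop_meanS n C t h s : pop_mean n.+1 C t h s = exp (- rate s C * t) * h s +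
  sumR (pairs_in s C) (fun p =>
    RInt (fun u => exp (- rate s C * u) * pop_mean n C (t - u) h (Defs.merge s p)) 0 t).
Proof.
rewrite /pop_mean /=.
under eq_sumR => s' do rewrite Rmult_plus_distr_r -mulR_suml Rmult_assoc.
rewrite sumRD sumR_all_states_pred1 exchange_sumR; congr (_ + _).
apply: eq_sumR => p.
rewrite (RInt_ext _ (fun u => sumR (all_states X) (fun s' =>
    exp (- rate s C * u) * ptrans n C (t - u) (Defs.merge s p) s' * h s'))); last first.
  by move=> u _; rewrite -mulR_sumr; apply: eq_sumR => s'; rewrite Rmult_assoc.
have conv_h s' x : continuous
    (fun u => exp (- rate s C * u) * ptrans n C (t - u) (Defs.merge s p) s' * h s') x.
  by apply: continuous_mulR; [apply: continuous_ptrans_convolution | apply: continuous_const].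
rewrite RInt_sumR => [|s']; last exact: ex_RInt_continuous_R.
apply: eq_sumR => s'; rewrite RInt_mulr //.
exact/ex_RInt_continuous_R/continuous_ptrans_convolution.
Qed.

Definition root_mean n h s := sumR (all_states X) (fun sf => proot n s sf * h sf).

Lemma root_mean0 h s : root_mean 0 h s = h s.
Proof. exact: sumR_all_states_pred1. Qed.

Lemma root_meanS n h s : root_mean n.+1 h s =
  if pairs_in s setT is [::] then h s
  else sumR (pairs_in s setT) (fun p => / rate s setT * root_mean n h (Defs.merge s p)).
Proof.
rewrite /root_mean /=; case: (pairs_in s setT) => [|p ps]; first exact: sumR_all_states_pred1.
under eq_sumR => sf do rewrite -mulR_suml.
rewrite exchange_sumR; apply: eq_sumR => q.
by rewrite -mulR_sumr; apply: eq_sumR => sf; rewrite Rmult_assoc.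
Qed.

Definition run_mean Es len h s := sumR (all_states X) (fun sf => run Es len s sf * h sf).

Lemma run_mean_nil len h s : run_mean [::] len h s = root_mean #|X| h s.
Proof. by []. Qed.

Lemma run_mean_cons C Es len h s :
  run_mean (C :: Es) len h s = pop_mean #|X| C (len C) (run_mean Es len h) s.
Proof.
rewrite /run_mean /pop_mean /=.
under eq_sumR => sf do rewrite -mulR_suml.
rewrite exchange_sumR; apply: eq_sumR => s'.
by rewrite -mulR_sumr; apply: eq_sumR => sf; rewrite Rmult_assoc.
Qed.

End CoalescentMeans.

Definition gene_tree_indicator (X : finType) (T : {set {set {set X}}}) (sf : state X) :=
  b2R (unroot sf.2 == T).

Lemma msc_prob_run_mean (X : finType) (sg : rmtree X) T : msc_prob sg T =
  run_mean (sort (fun A B : {set X} => (#|A| <= #|B|)%N) (internal_edges (rtop sg)))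
    (rlen sg) (gene_tree_indicator T) (init_state X).
Proof. by []. Qed.

Lemma setC_neq (T : finType) (A : {set T}) : (0 < #|T|)%N -> A != ~: A.
Proof. by case/card_gt0P => x _; apply/negP => /eqP/setP/(_ x); rewrite inE; case: (x \in A). Qed.

Section Lineages.
Variable X : finType.
Implicit Types (s : state X) (C A B : {set X}) (L : {set {set X}}).

Definition lineage_partition s :=
  (forall A, A \in s.1 -> A != set0) /\
  (forall A B, A \in s.1 -> B \in s.1 -> A != B -> [disjoint A & B]).

Lemma pairs_inP s C p : p \in pairs_in s C -> exists A B,
  [/\ A \in s.1, B \in s.1, A != B, A \subset C & B \subset C] /\ p = [set A; B].
Proof.
rewrite mem_enum inE => /andP[/cards2P[A [B [AB ->]]] sub].
have inC D : D \in [set A; B] -> D \in s.1 /\ D \subset C.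
  by move=> /(subsetP sub); rewrite inE => /andP[].
have [sA AC] := inC A (set21 A B); have [sB BC] := inC B (set22 A B).
by exists A, B.
Qed.

Lemma size_pairs_in s C : INR (size (pairs_in s C)) = rate s C.
Proof.
rewrite /pairs_in /rate -cardE -cards_draws; congr INR; apply: eq_card => p.
by rewrite !inE andbC.
Qed.

Lemma bigcup_set2 A B : \bigcup_(a in [set A; B]) a = A :|: B.
Proof.
apply/setP => x; apply/bigcupP/setUP.
- by case=> a; rewrite !inE => /orP[] /eqP -> xa; [left | right].
- by case=> xa; [exists A | exists B]; rewrite ?inE ?eqxx ?orbT.
Qed.

Lemma merge_set2 s A B :
  Defs.merge s [set A; B] = (A :|: B |: (s.1 :\: [set A; B]), A :|: B |: s.2).
Proof. by rewrite /Defs.merge bigcup_set2. Qed.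

Lemma disjoint_sub_set0 A B : [disjoint A & B] -> A \subset B -> A = set0.
Proof. by move=> AB sAB; rewrite -(setIidPl sAB); apply: disjoint_setI0. Qed.

Lemma cardsU_disjoint A B : [disjoint A & B] -> #|A :|: B| = (#|A| + #|B|)%N.
Proof. by move=> AB; rewrite cardsU (disjoint_setI0 AB) cards0 subn0. Qed.

Lemma card_setU1D2 L A B : A \in L -> B \in L -> A != B -> A :|: B \notin L ->
  (#|A :|: B |: (L :\: [set A; B])|).+1 = #|L|.
Proof.
move=> LA LB AB LU.
have sub : [set A; B] \subset L by apply/subsetP => D; rewrite !inE => /orP[] /eqP ->.
have L2 : (1 < #|L|)%N by move: (subset_leq_card sub); rewrite cards2 AB.
rewrite cardsU1 inE (negbTE LU) andbF cardsDS // cards2 AB.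
by case: #|L| L2 => [|[|m]] // _; rewrite subn2.
Qed.

Section Partition.
Variables (s : state X) (A B : {set X}).
Hypotheses (Ps : lineage_partition s) (sA : A \in s.1) (sB : B \in s.1) (AB : A != B).

Lemma setU_lineage_notin : A :|: B \notin s.1.
Proof.
case: Ps => nz dj; apply/negP => sU.
have [UA|UA] := eqVneq (A :|: B) A.
- have BA : B \subset A by rewrite -UA subsetUr.
  by move: (nz _ sB); rewrite (disjoint_sub_set0 (dj _ _ sB sA _) BA) ?eqxx // eq_sym.
- have AU : A \subset A :|: B by apply: subsetUl.
  by move: (nz _ sA); rewrite (disjoint_sub_set0 (dj _ _ sA sU _) AU) ?eqxx // eq_sym.
Qed.

Lemma lineage_partition_merge : lineage_partition (Defs.merge s [set A; B]).
Proof.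
case: Ps => nz dj; rewrite merge_set2; split => /=.
- move=> D; rewrite !inE => /orP[/eqP -> | /andP[_]]; last exact: nz.
  by apply: contraNneq (nz _ sA) => /eqP; rewrite setU_eq0 => /andP[].
- have dU D : D \in s.1 -> ~~ ((D == A) || (D == B)) -> [disjoint A :|: B & D].
    rewrite negb_or => sD /andP[DA DB]; rewrite eq_sym in DA; rewrite eq_sym in DB.
    by rewrite -setI_eq0 setIUl !disjoint_setI0 ?setU0 ?dj.
  move=> D1 D2; rewrite !inE => /orP[/eqP -> | /andP[n1 s1]] /orP[/eqP -> | /andP[n2 s2]].
  + by rewrite eqxx.
  + by move=> _; apply: dU.
  + by move=> _; rewrite disjoint_sym; apply: dU.
  + exact: dj.
Qed.

Lemma card_merge_lineages :
  (#|(Defs.merge s [set A; B]).1|).+1 = #|s.1|.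
Proof. by rewrite merge_set2 card_setU1D2 // setU_lineage_notin. Qed.

Lemma card_lineages_in_merge C : A \subset C -> B \subset C ->
  (#|lineages_in (Defs.merge s [set A; B]) C|).+1 = #|lineages_in s C|.
Proof.
move=> AC BC.
have -> : lineages_in (Defs.merge s [set A; B]) C =
          A :|: B |: (lineages_in s C :\: [set A; B]).
  apply/setP => D; rewrite merge_set2 !inE.
  by case: (D =P A :|: B) => [-> | _] /=; [rewrite subUset AC BC | rewrite andbA].
apply: card_setU1D2; rewrite ?inE ?sA ?sB ?AC ?BC //.
by rewrite negb_and setU_lineage_notin.
Qed.

End Partition.

Lemma card_lineagesU s D1 D2 : lineage_partition s -> D1 \in s.1 -> D2 \in s.1 -> D1 != D2 ->
  [/\ #|D1 :|: D2| = (#|D1| + #|D2|)%N, (0 < #|D1|)%N & (0 < #|D2|)%N].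
Proof. by case=> nz dj sD1 sD2 D12; rewrite cardsU_disjoint ?dj // !card_gt0 !nz. Qed.

Lemma merge_lineage_old s A B D : D \in (Defs.merge s [set A; B]).1 ->
  (#|D| < #|A :|: B|)%N -> D \in s.1 /\ D \notin [set A; B].
Proof.
by rewrite merge_set2 !inE => /orP[/eqP -> | /andP[-> ->]]; rewrite ?ltnn.
Qed.

Lemma card_lineagesU_eq2 s D1 D2 : lineage_partition s -> D1 \in s.1 -> D2 \in s.1 ->
  D1 != D2 -> #|D1 :|: D2| = 2%N -> #|D1| = 1%N /\ #|D2| = 1%N.
Proof. by move=> Ps sD1 sD2 D12; have [-> ? ?] := card_lineagesU Ps sD1 sD2 D12; lia. Qed.

Lemma split_ofC A : split_of (~: A) = split_of A.
Proof. by rewrite /split_of setCK setUC. Qed.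

Lemma unroot_setU1 U (G : {set {set X}}) : unroot (U |: G) =
  if (1 < #|U|)%N && (1 < #|~: U|)%N then split_of U |: unroot G else unroot G.
Proof.
apply/setP => S; rewrite /unroot; case: ifP => PU.
- rewrite !inE; apply/imsetP/idP.
  + case=> D; rewrite !inE => /andP[/orP[/eqP -> | GD] PD] ->; first by rewrite eqxx.
    by apply/orP; right; apply/imsetP; exists D; rewrite ?inE ?GD.
  + case/orP => [/eqP -> | /imsetP[D GD ->]]; first by exists U; rewrite ?inE ?eqxx.
    by exists D => //; move: GD; rewrite !inE => /andP[-> ->]; rewrite orbT.
- apply/imsetP/imsetP.
  + case=> D; rewrite !inE => /andP[/orP[/eqP -> | GD] PD] ->; first by rewrite PU in PD.
    by exists D; rewrite ?inE ?GD.
  + by case=> D; rewrite !inE => /andP[GD PD] ->; exists D; rewrite ?inE ?GD ?orbT.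
Qed.

End Lineages.

Section CherryDecided.
Variable X : finType.
Hypothesis X4 : #|X| = 4%N.
Implicit Types (s : state X) (C A B : {set X}).

Lemma cardsC2 A : #|A| = 2%N -> #|~: A| = 2%N.
Proof. by move=> A2; have := cardsC A; rewrite X4 A2; lia. Qed.

Lemma quartet_setC_neq A : A != ~: A.
Proof. by apply: setC_neq; rewrite X4. Qed.

(* The state after the first cherry, of split [S]: every later coalescence creates a
   cluster of size 3 or a cherry of split [S] again, so the unrooted gene tree stays [S]. *)
Definition cherry_decided s S := [/\ lineage_partition s, (#|s.1| <= 3)%N,
  unroot s.2 = [set S] &
  forall A B, A \in s.1 -> B \in s.1 -> A != B -> #|A :|: B| = 2%N -> split_of (A :|: B) = S].

Lemma cherry_decided_merge s S C p :
  cherry_decided s S -> p \in pairs_in s C -> cherry_decided (Defs.merge s p) S.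
Proof.
move=> [Ps s3 rootS cherryS] /pairs_inP [A [B [[sA sB AB _ _] ->]]].
have Ps' := lineage_partition_merge Ps sA sB.
split => //.
- by have := card_merge_lineages Ps sA sB AB; lia.
- rewrite merge_set2 /= unroot_setU1 rootS; case: ifP => // /andP[U2 CU2].
  have [AB2 A0 B0] := card_lineagesU Ps sA sB AB.
  by rewrite cherryS ?setUid //; have := cardsC (A :|: B); rewrite X4; lia.
- move=> D1 D2 sD1 sD2 D12 U2.
  have [D1_1 D2_1] := card_lineagesU_eq2 Ps' sD1 sD2 D12 U2.
  have AB2 : (1 < #|A :|: B|)%N.
    by have [-> A0 B0] := card_lineagesU Ps sA sB AB; rewrite -addn1 leq_add.
  have [sD1' _] := merge_lineage_old sD1 (ltac:(by rewrite D1_1)).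
  have [sD2' _] := merge_lineage_old sD2 (ltac:(by rewrite D2_1)).
  exact: cherryS.
Qed.

Lemma lineages_in_init C : lineages_in (init_state X) C = [set [set x] | x in C].
Proof.
apply/setP => D; rewrite !inE; apply/andP/imsetP.
- by case=> /imsetP [x _ ->]; rewrite sub1set => Cx; exists x.
- by case=> x Cx ->; split; [apply/imsetP; exists x | rewrite sub1set].
Qed.

Lemma lineage_partition_init : lineage_partition (init_state X).
Proof.
split => /=.
- by move=> D /imsetP [x _ ->]; apply/set0Pn; exists x; rewrite inE.
- move=> D1 D2 /imsetP [x _ ->] /imsetP [y _ ->] xy.
  by rewrite disjoints1 inE; apply: contraNneq xy => ->.
Qed.

Lemma card_init_lineages : #|(init_state X).1| = #|X|.
Proof. by rewrite /= card_imset //; apply: set1_inj. Qed.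

Lemma pairs_in_initP C p : p \in pairs_in (init_state X) C ->
  exists u v, [/\ u != v, u \in C, v \in C & p = [set [set u]; [set v]]].
Proof.
move=> /pairs_inP [A [B [[/imsetP[u _ ->] /imsetP[v _ ->] uv uC vC] ->]]].
exists u, v; split; rewrite -?sub1set //.
by apply: contraNneq uv => ->.
Qed.

Lemma unroot_singletons : unroot [set [set x] | x : X] = set0.
Proof.
apply/setP => S; rewrite inE; apply/imsetP => -[D].
by rewrite inE => /andP[/imsetP[x _ ->]]; rewrite cards1.
Qed.

Lemma cherry_decided_init C p : p \in pairs_in (init_state X) C ->
  cherry_decided (Defs.merge (init_state X) p) (split_of (\bigcup_(a in p) a)).
Proof.
move=> /pairs_in_initP [u [v [uv uC vC ->]]].
rewrite bigcup_set2.
have su : [set u] \in (init_state X).1 by apply/imsetP; exists u.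
have sv : [set v] \in (init_state X).1 by apply/imsetP; exists v.
have suv : [set u] != [set v] by apply: contra_neq uv => /set1_inj.
have Ps' := lineage_partition_merge lineage_partition_init su sv.
have U2 : #|[set u] :|: [set v]| = 2%N by rewrite -/[set u; v] cards2 uv.
split => //.
- have := card_merge_lineages lineage_partition_init su sv suv.
  by rewrite card_init_lineages X4; lia.
- by rewrite merge_set2 /= unroot_setU1 U2 cardsC2 //= unroot_singletons setU0.
- move=> D1 D2 sD1 sD2 D12 D12_2.
  have [D1_1 D2_1] := card_lineagesU_eq2 Ps' sD1 sD2 D12 D12_2.
  have [/imsetP[z _ ez] zuv] := merge_lineage_old sD1 (ltac:(by rewrite D1_1 U2)).
  have [/imsetP[w _ ew] wuv] := merge_lineage_old sD2 (ltac:(by rewrite D2_1 U2)).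
  move: D12_2 zuv wuv; rewrite ez ew !inE !negb_or !(inj_eq set1_inj).
  move=> zw2 /andP[zu zv] /andP[wu wv].
  rewrite -[RHS]split_ofC; congr split_of; apply/eqP; rewrite eqEcard (cardsC2 U2) zw2 leqnn andbT.
  by apply/subsetP => x; rewrite !inE => /orP[] /eqP ->; rewrite negb_or ?zu ?zv ?wu ?wv.
Qed.

End CherryDecided.

Section DecidedMeans.
Variable X : finType.
Hypothesis X4 : #|X| = 4%N.
Implicit Types (s : state X) (C : {set X}) (h : state X -> R) (T : {set {set {set X}}}).

Definition cherry_determined T h :=
  forall s S, cherry_decided s S -> h s = b2R ([set S] == T).

Lemma rate_eq0 s C : (#|lineages_in s C| <= 1)%N -> rate s C = 0.
Proof. by move=> C1; rewrite /rate bin_small //; apply: leq_ltn_trans C1 _. Qed.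

Lemma rate_neq0 s C p : p \in pairs_in s C -> rate s C <> 0.
Proof. by move=> Cp; rewrite -size_pairs_in; apply: not_0_INR; case: (pairs_in s C) Cp. Qed.

Lemma root_mean_determined n T h : cherry_determined T h -> cherry_determined T (root_mean n h).
Proof.
move=> hT; elim: n => [|n IH] s S sS; first by rewrite root_mean0; apply: hT.
rewrite root_meanS; case Ep: (pairs_in s setT) => [|p ps]; first exact: hT.
have sp : p \in pairs_in s setT by rewrite Ep mem_head.
rewrite -Ep (eq_in_sumR (g := fun _ => / rate s setT * b2R ([set S] == T))); last first.
  by move=> q sq; rewrite (IH _ S) //; apply: cherry_decided_merge sq.
by rewrite sumR_const size_pairs_in; field; apply: rate_neq0 sp.
Qed.

Lemma pop_mean_decided C T h : cherry_determined T h -> forall n s S t,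
  cherry_decided s S -> (#|lineages_in s C| <= n.+1)%N ->
  pop_mean n C t h s = b2R ([set S] == T).
Proof.
move=> hT; elim=> [|n IH] s S t sS sC.
  by rewrite pop_mean0 rate_eq0 // Ropp_0 Rmult_0_l exp_0 Rmult_1_l; apply: hT.
rewrite pop_meanS (hT _ _ sS).
rewrite (eq_in_sumR (g := fun _ =>
    b2R ([set S] == T) * (1 - exp (- rate s C * t)) / rate s C)); last first.
  move=> p sp; rewrite -RInt_exp_const; last exact: rate_neq0 sp.
  apply: RInt_ext => u _; congr (_ * _); apply: (IH _ S).
    exact: cherry_decided_merge sp.
  case: sS => Ps _ _ _; case/pairs_inP: sp => [A [B [[sA sB AB AC BC] ->]]].
  by have := card_lineages_in_merge Ps sA sB AB AC BC; lia.
rewrite sumR_const size_pairs_in.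
have [->|r0] := Req_dec (rate s C) 0; last by field.
by rewrite Ropp_0 Rmult_0_l exp_0; lra.
Qed.

Definition cherry_count C T := sumR (pairs_in (init_state X) C)
  (fun p => b2R ([set split_of (\bigcup_(a in p) a)] == T)).

Lemma rate_init C : rate (init_state X) C = INR 'C(#|C|, 2).
Proof. by rewrite /rate lineages_in_init card_imset //; apply: set1_inj. Qed.

Lemma pop_mean_init n C t T h : cherry_determined T h -> (2 <= #|C| <= n.+2)%N ->
  pop_mean n.+1 C t h (init_state X) =
    exp (- rate (init_state X) C * t) * h (init_state X) +
    (1 - exp (- rate (init_state X) C * t)) / rate (init_state X) C * cherry_count C T.
Proof.
move=> hT /andP[C2 Cn].
have r0 : rate (init_state X) C <> 0.
  by rewrite rate_init; apply: not_0_INR; apply/eqP; rewrite -lt0n bin_gt0.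
rewrite pop_meanS /cherry_count -mulR_sumr; congr (_ + _); apply: eq_in_sumR => p sp.
rewrite (RInt_ext _ (fun u => exp (- rate (init_state X) C * u) *
    b2R ([set split_of (\bigcup_(a in p) a)] == T))); last first.
  move=> u _; congr (_ * _).
  apply: (pop_mean_decided hT (t - u) (cherry_decided_init X4 sp)).
  case/pairs_inP: (sp) => [A [B [[sA sB AB AC BC] ep]]].
  have := card_lineages_in_merge (lineage_partition_init X) sA sB AB AC BC.
  by rewrite -ep lineages_in_init card_imset; [lia | apply: set1_inj].
by rewrite RInt_exp_const //; field.
Qed.

Lemma root_mean_init n T h : cherry_determined T h ->
  root_mean n.+1 h (init_state X) = / 6 * cherry_count setT T.
Proof.
move=> hT; have r6 : rate (init_state X) setT = 6 by rewrite rate_init cardsT X4 /=; lra.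
rewrite root_meanS /cherry_count; case Ep: (pairs_in (init_state X) setT) => [|p ps].
  by have := size_pairs_in (init_state X) setT; rewrite Ep r6 /=; lra.
rewrite -Ep -mulR_sumr; apply: eq_in_sumR => q sq.
by rewrite r6 (root_mean_determined n hT (cherry_decided_init X4 sq)).
Qed.

End DecidedMeans.

Section RootedHierarchy.
Variable X : finType.
Implicit Types (H : {set {set X}}) (A B C : {set X}).

Definition internal_clusters H := [set C | internal_edge H C].

Lemma sub_child H A B C : rooted_binary H -> A \in H -> B \in H -> C \in H ->
  [disjoint A & B] -> C \subset A :|: B -> C != A :|: B -> C \subset A \/ C \subset B.
Proof.
case=> _ _ H0 lam _ HA HB HC AB CAB CnAB.
have sub_other (D E : {set X}) : [disjoint C & D] -> C \subset E :|: D -> C \subset E.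
  move=> CD CED; apply/subsetP => x Cx; move/subsetP/(_ x Cx): CED; rewrite inE.
  by case/orP => // Dx; move: CD => /disjointFr/(_ Cx); rewrite Dx.
case/or3P: (lam _ _ HC HA) => [CA | AC | CA];
  [by left | | by right; apply: sub_other CA _; rewrite setUC].
case/or3P: (lam _ _ HC HB) => [CB | BC | CB]; last by left; apply: sub_other CB _.
- have A0 : A = set0 by apply: disjoint_sub_set0 AB (subset_trans AC CB).
  by move: HA H0; rewrite A0 => ->.
- by move: CnAB; rewrite eqEsubset CAB subUset AC BC.
Qed.

Lemma rooted_binary_card_gt0 H C : rooted_binary H -> C \in H -> (0 < #|C|)%N.
Proof. by case=> _ _ H0 _ _ HC; rewrite card_gt0; apply: contraNneq H0 => <-. Qed.

Lemma rooted_binary_root_children H : rooted_binary H -> (1 < #|X|)%N ->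
  exists A, A \in H /\ ~: A \in H.
Proof.
case=> HT _ _ _ spl X1; have := spl _ HT; rewrite cardsT => /(_ X1) [A [B [HA HB AB ABT]]].
exists A; suff -> : ~: A = B by [].
apply/setP => x; rewrite inE; have : x \in A :|: B by rewrite ABT inE.
by rewrite inE; case: (boolP (x \in A)) => //= Ax _; rewrite (disjointFr AB Ax).
Qed.

End RootedHierarchy.

Section QuartetTopologies.
Variable X : finType.
Hypothesis X4 : #|X| = 4%N.
Implicit Types (H : {set {set X}}) (A B C : {set X}).

Lemma card_le4 C : (#|C| <= 4)%N.
Proof. by rewrite -X4 max_card. Qed.

Lemma eqsT_card C : (C == setT) = (#|C| == 4%N).
Proof.
apply/eqP/eqP => [-> | C4]; first by rewrite cardsT.
by apply/eqP; rewrite eqEcard subsetT cardsT X4 C4.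
Qed.

Lemma internal_clustersE H C :
  (C \in internal_clusters H) = [&& C \in H, (1 < #|C|)%N & (#|C| < 4)%N].
Proof. by rewrite in_set /internal_edge eqsT_card [(_ < 4)%N]ltn_neqAle card_le4 andbT. Qed.

Lemma sub_card_eq A C : A \subset C -> (#|C| <= #|A|)%N -> A = C.
Proof. by move=> sAC CA; apply/eqP; rewrite eqEcard sAC. Qed.

Lemma balanced_internal_clusters H A : rooted_binary H -> A \in H -> ~: A \in H ->
  #|A| = 2%N -> internal_clusters H = [set A; ~: A].
Proof.
move=> rH HA HAc A2; have Ac2 := cardsC2 X4 A2.
apply/setP => C; rewrite in_set2 internal_clustersE; apply/and3P/idP.
- case=> HC C1 C4; have CT : C != A :|: ~: A by rewrite setUCr eqsT_card neq_ltn C4.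
  have CAAc : C \subset A :|: ~: A by rewrite setUCr subsetT.
  case: (sub_child rH HA HAc HC _ CAAc CT) => [|CA|CA]; rewrite ?disjoints_subset ?setCK //.
  + by rewrite (sub_card_eq CA) ?eqxx // A2.
  + by rewrite (sub_card_eq CA) ?eqxx ?orbT // Ac2.
- by case/orP => /eqP ->; rewrite ?HA ?HAc ?A2 ?Ac2.
Qed.

Lemma caterpillar_internal_clusters H B : rooted_binary H -> B \in H -> ~: B \in H ->
  #|B| = 3%N -> exists A, #|A| = 2%N /\ internal_clusters H = [set A; B].
Proof.
move=> rH HB HBc B3; have Bc1 : #|~: B| = 1%N by have := cardsC B; rewrite X4 B3; lia.
have [_ _ _ _ spl] := rH; have := spl _ HB; rewrite B3 => /(_ isT) [A1 [A2 [HA1 HA2 A12 AB]]].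
have := cardsU_disjoint A12; rewrite AB B3 => A12_3.
wlog A1_2 : A1 A2 HA1 HA2 A12 AB A12_3 / #|A1| = 2%N => [hwlog|].
  have [A1_2|A1n2] := eqVneq #|A1| 2%N; first exact: (hwlog A1 A2).
  have := rooted_binary_card_gt0 rH HA1; have := rooted_binary_card_gt0 rH HA2 => A2_0 A1_0.
  by apply: (hwlog A2 A1); rewrite 1?disjoint_sym 1?setUC //; lia.
have A2_1 : #|A2| = 1%N by lia.
exists A1; split => //; apply/setP => C; rewrite in_set2 internal_clustersE.
apply/and3P/idP.
- case=> HC C1 C4; have CT : C != B :|: ~: B by rewrite setUCr eqsT_card neq_ltn C4.
  have CBBc : C \subset B :|: ~: B by rewrite setUCr subsetT.
  case: (sub_child rH HB HBc HC _ CBBc CT) => [|CB|CB]; rewrite ?disjoints_subset ?setCK //;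
    last by move: (subset_leq_card CB); rewrite Bc1 => /(leq_trans C1).
  have [->|CnB] := eqVneq C B; first by rewrite orbT.
  rewrite -AB in CB CnB; case: (sub_child rH HA1 HA2 HC A12 CB CnB) => CA.
  + by rewrite (sub_card_eq CA) ?eqxx // A1_2.
  + by move: (subset_leq_card CA); rewrite A2_1 => /(leq_trans C1).
- by case/orP => /eqP ->; rewrite ?HA1 ?HB ?A1_2 ?B3.
Qed.

Lemma rooted_binary_quartet H : rooted_binary H ->
  (exists A B, [/\ #|A| = 2%N, #|B| = 3%N & internal_clusters H = [set A; B]]) \/
  (exists A, #|A| = 2%N /\ internal_clusters H = [set A; ~: A]).
Proof.
move=> rH; have [A [HA HAc]] := rooted_binary_root_children rH (ltac:(by rewrite X4)).
have := cardsC A; rewrite X4; have := rooted_binary_card_gt0 rH HA.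
have := rooted_binary_card_gt0 rH HAc.
case: (ltngtP #|A| 2) => [A1 | A3 | A2] Ac0 A0 AAc4.
- have [B [B2 ->]] : exists B, #|B| = 2%N /\ internal_clusters H = [set B; ~: A].
    by apply: caterpillar_internal_clusters; rewrite ?setCK //; lia.
  by left; exists B, (~: A); split => //; lia.
- have [B [B2 ->]] := caterpillar_internal_clusters rH HA HAc ltac:(lia).
  by left; exists B, A; split => //; lia.
- by right; exists A; split => //; apply: balanced_internal_clusters.
Qed.

End QuartetTopologies.

Lemma split_of_eq (T : finType) (A B : {set T}) :
  (split_of B == split_of A) = (B \in [set A; ~: A]).
Proof.
apply/eqP/idP => [BA | ]; first by rewrite -[_ \in _]/(B \in split_of A) -BA !inE eqxx.
by rewrite !inE => /orP[] /eqP ->; rewrite ?split_ofC.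
Qed.

Lemma count_enum_set (T : finType) (A : {set T}) (P : pred T) :
  count P (enum A) = #|[set x in A | P x]|.
Proof.
rewrite cardE -size_filter; apply/perm_size/uniq_perm.
- by rewrite filter_uniq ?enum_uniq.
- exact: enum_uniq.
- by move=> x; rewrite mem_filter !mem_enum inE andbC.
Qed.

Section CherryCounts.
Variable X : finType.
Hypothesis X4 : #|X| = 4%N.
Implicit Types (A B C : {set X}) (T : {set {set {set X}}}).

Definition singletons B : {set {set X}} := [set [set x] | x in B].

Lemma mem_singletons B x : ([set x] \in singletons B) = (x \in B).
Proof. by rewrite mem_imset //; apply: set1_inj. Qed.

Lemma singletons_inj : injective singletons.
Proof.
by move=> B1 B2 e; apply/setP => x; rewrite -(mem_singletons B1) -(mem_singletons B2) e.
Qed.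

Lemma bigcup_singletons B : \bigcup_(a in singletons B) a = B.
Proof.
apply/setP => x; apply/bigcupP/idP.
- by case=> a /imsetP [y By ->]; rewrite inE => /eqP ->.
- by move=> Bx; exists [set x]; [apply/imsetP; exists x | rewrite inE].
Qed.

Definition pairs_of C := [set B : {set X} | B \subset C & #|B| == 2%N].

Lemma cherry_count_pairs C T : cherry_count C T =
  sumR (enum (pairs_of C)) (fun B => b2R ([set split_of B] == T)).
Proof.
rewrite /cherry_count (@perm_sumR _ _ (map singletons (enum (pairs_of C)))).
  by rewrite sumR_map; apply: eq_sumR => B; rewrite bigcup_singletons.
apply: uniq_perm; first exact: enum_uniq.
  by rewrite map_inj_uniq ?enum_uniq //; apply: singletons_inj.
move=> p; apply/idP/mapP.
- move=> /pairs_in_initP [u [v [uv Cu Cv ->]]]; exists [set u; v].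
    by rewrite mem_enum inE cards2 uv andbT; apply/subsetP => x; rewrite !inE => /orP[]/eqP->.
  by rewrite /singletons imsetU1 imset_set1.
- case=> B; rewrite mem_enum inE => /andP [BC B2] ->.
  rewrite mem_enum inE lineages_in_init /singletons card_imset; last exact: set1_inj.
  by rewrite B2; apply: imsetS.
Qed.

Lemma cherry_count_card2 C T : #|C| = 2%N -> cherry_count C T = b2R ([set split_of C] == T).
Proof.
move=> C2; rewrite cherry_count_pairs.
have -> : pairs_of C = [set C].
  apply/setP => B; rewrite !inE; apply/andP/eqP => [[BC /eqP B2] | ->].
  - by apply/eqP; rewrite eqEcard BC B2 C2.
  - by rewrite subxx C2.
by rewrite enum_set1 /=; lra.
Qed.

Lemma cherry_count_quartet C A : #|A| = 2%N ->
  cherry_count C [set split_of A] = INR #|[set B in [set A; ~: A] | B \subset C]|.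
Proof.
move=> A2; rewrite cherry_count_pairs.
under eq_sumR => B do rewrite (inj_eq set1_inj) split_of_eq.
rewrite sumR_count count_enum_set; congr (INR _); apply: eq_card => B.
rewrite !inE andbC; apply: andb_id2l => BA.
by apply: andb_idr => _; case/orP: BA => /eqP ->; rewrite ?cardsC2 ?A2.
Qed.

Lemma cherry_count_setT A : #|A| = 2%N -> cherry_count setT [set split_of A] = 2.
Proof.
move=> A2; rewrite cherry_count_quartet //.
have -> : [set B in [set A; ~: A] | B \subset setT] = [set A; ~: A].
  by apply/setP => B; rewrite !inE subsetT andbT.
by rewrite cards2 (quartet_setC_neq X4) /=; lra.
Qed.

Lemma cherry_count_card3 A B : #|A| = 2%N -> #|B| = 3%N -> cherry_count B [set split_of A] = 1.
Proof.
move=> A2 B3; rewrite cherry_count_quartet //.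
have /eqP/cards1P [w Bcw] : #|~: B| = 1%N by have := cardsC B; rewrite X4 B3; lia.
have subB (D : {set X}) : (D \subset B) = (w \notin D).
  by rewrite -(setCK B) Bcw -disjoints_subset disjoint_sym disjoints1.
suff [D ->] : exists D, [set D in [set A; ~: A] | D \subset B] = [set D].
  by rewrite cards1 /=; lra.
have AAc := quartet_setC_neq X4 A.
case: (boolP (w \in A)) => wA; [exists (~: A) | exists A];
  apply/setP => D; rewrite !inE subB; have [-> | DA] := eqVneq D A.
- by rewrite wA (negbTE AAc).
- by rewrite /=; case: eqP => // ->; rewrite inE negbK wA.
- by rewrite wA.
- by rewrite /=; case: eqP => // ->; rewrite inE negbK (negbTE wA).
Qed.

End CherryCounts.

Lemma perm_pair (T : eqType) (s : seq T) a b : a != b -> perm_eq s [:: a; b] ->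
  s = [:: a; b] \/ s = [:: b; a].
Proof.
move=> ab sab; have us : uniq s by rewrite (perm_uniq sab) /= inE ab.
move: sab us (perm_size sab); case: s => [|x [|y [|z s]]] //= sab /andP[]; rewrite inE => xy _ _.
have xab : x \in [:: a; b] by rewrite -(perm_mem sab) mem_head.
have yab : y \in [:: a; b] by rewrite -(perm_mem sab) !inE eqxx orbT.
move: xab yab xy; rewrite !inE => /orP[] /eqP -> /orP[] /eqP ->; rewrite ?eqxx //= => _.
- by left.
- by right.
Qed.

Lemma sort_perm_pair (T : eqType) (r : rel T) (s : seq T) a b :
  total r -> a != b -> perm_eq s [:: a; b] ->
  sort r s = [:: a; b] \/ (r b a /\ sort r s = [:: b; a]).
Proof.
move=> rtot ab sab; have := sort_sorted rtot s.
have ssab : perm_eq (sort r s) [:: a; b] by rewrite perm_sort.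
have [-> | ->] := perm_pair ab ssab; first by left.
by rewrite /= andbT => rba; right.
Qed.

Lemma unrootP (X : finType) (H : {set {set X}}) S : reflect
  (exists2 C, (C \in internal_clusters H) && (1 < #|~: C|)%N & S = split_of C)
  (S \in unroot H).
Proof.
apply: (iffP imsetP) => -[C]; rewrite !inE /internal_edge.
- move=> /and3P[HC C1 Cc1] ->; exists C; rewrite // Cc1 andbT inE /internal_edge HC C1 /=.
  by apply: contraTneq Cc1 => ->; rewrite setCT cards0.
- by case/andP => /and3P[HC C1 _] Cc1 ->; exists C; rewrite // inE HC C1.
Qed.

Lemma internal_edges_pair (X : finType) (H : {set {set X}}) A B : A != B ->
  internal_clusters H = [set A; B] -> perm_eq (internal_edges H) [:: A; B].
Proof.
move=> AB IAB; rewrite /internal_edges -/(internal_clusters _) IAB.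
apply: uniq_perm; rewrite ?enum_uniq /= ?inE ?AB //.
by move=> D; rewrite mem_enum !inE.
Qed.

Lemma ulen_pair (X : finType) (sg : rmtree X) A B S : A != B ->
  internal_clusters (rtop sg) = [set A; B] ->
  ulen sg S = (if split_of A == S then rlen sg A else 0) +
              (if split_of B == S then rlen sg B else 0).
Proof. by move=> AB IAB; rewrite /ulen (perm_sumR _ (internal_edges_pair AB IAB)) /=; lra. Qed.

Lemma card_leq_total (X : finType) : total (fun A B : {set X} => (#|A| <= #|B|)%N).
Proof. by move=> A B; apply: leq_total. Qed.

Section QuartetProbabilities.
Variable X : finType.
Hypothesis X4 : #|X| = 4%N.
Implicit Types (sg : rmtree X) (A B C : {set X}) (T : {set {set {set X}}}).

Lemma gene_tree_indicator_determined T : cherry_determined T (gene_tree_indicator T).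
Proof. by move=> s S [_ _ sS _]; rewrite /gene_tree_indicator sS. Qed.

Lemma run_mean_determined Es len T :
  cherry_determined T (run_mean Es len (gene_tree_indicator T)).
Proof.
elim: Es => [|C Es IH] s S sS.
  by rewrite run_mean_nil; apply: (root_mean_determined X4 _ (gene_tree_indicator_determined T)).
rewrite run_mean_cons X4; apply: (pop_mean_decided X4 IH (len C) sS).
case: sS => _ s3 _ _; apply: leq_trans (leqW (leqW s3)).
by apply/subset_leq_card/subsetP => D; rewrite inE => /andP[].
Qed.

Lemma run_mean_two_clusters C1 C2 len T : (2 <= #|C1|)%N -> (2 <= #|C2|)%N ->
  let e i := exp (- rate (init_state X) i * len i) in
  run_mean [:: C1; C2] len (gene_tree_indicator T) (init_state X) =
  e C1 * (e C2 * (/ 6 * cherry_count setT T) +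
          (1 - e C2) / rate (init_state X) C2 * cherry_count C2 T) +
  (1 - e C1) / rate (init_state X) C1 * cherry_count C1 T.
Proof.
move=> C1_2 C2_2 e; have le5 (i : {set X}) : (#|i| <= 5)%N by rewrite (leq_trans (card_le4 X4 i)).
rewrite run_mean_cons X4 (pop_mean_init X4 _ (run_mean_determined _ _ _)) ?C1_2 ?le5 //.
rewrite run_mean_cons X4 (pop_mean_init X4 _ (run_mean_determined _ _ _)) ?C2_2 ?le5 //.
by rewrite run_mean_nil X4 (root_mean_init X4 _ (gene_tree_indicator_determined T)).
Qed.

Lemma rate_init_card2 C : #|C| = 2%N -> rate (init_state X) C = 1.
Proof. by move=> C2; rewrite rate_init C2. Qed.

Lemma rate_init_card3 C : #|C| = 3%N -> rate (init_state X) C = 3.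
Proof. by move=> C3; rewrite rate_init C3 /=; lra. Qed.

Lemma msc_prob_balanced sg A T : #|A| = 2%N ->
  internal_clusters (rtop sg) = [set A; ~: A] ->
  let e := exp (- (rlen sg A + rlen sg (~: A))) in
  msc_prob sg T = e * (/ 6 * cherry_count setT T) + (1 - e) * b2R ([set split_of A] == T).
Proof.
move=> A2 IA e; have Ac2 := cardsC2 X4 A2.
have cherry_A D : D \in [set A; ~: A] -> cherry_count D T = b2R ([set split_of A] == T).
  by rewrite !inE => /orP[] /eqP ->; rewrite cherry_count_card2 ?split_ofC.
have two_stage l1 l2 K q :
    exp (- l1) * (exp (- l2) * K + (1 - exp (- l2)) * q) + (1 - exp (- l1)) * q =
    exp (- (l1 + l2)) * K + (1 - exp (- (l1 + l2))) * q.
  by rewrite Ropp_plus_distr exp_plus; ring.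
have AAc := quartet_setC_neq X4 A.
rewrite msc_prob_run_mean /e.
have [-> | [_ ->]] := sort_perm_pair (@card_leq_total X) AAc (internal_edges_pair AAc IA);
  rewrite run_mean_two_clusters ?A2 ?Ac2 // /= !rate_init_card2 // !(cherry_A A, cherry_A (~: A));
  rewrite ?inE ?eqxx ?orbT // !Rdiv_1_r -!Ropp_mult_distr_l !Rmult_1_l two_stage //.
by rewrite (Rplus_comm (rlen sg (~: A))).
Qed.

Lemma msc_prob_caterpillar sg A B A' : #|A| = 2%N -> #|B| = 3%N ->
  internal_clusters (rtop sg) = [set A; B] -> #|A'| = 2%N ->
  msc_prob sg [set split_of A'] =
  exp (- rlen sg A) / 3 + (1 - exp (- rlen sg A)) * b2R (split_of A == split_of A').
Proof.
move=> A2 B3 IAB A'2; have AB : A != B by apply: contra_eqN A2 => /eqP ->; rewrite B3.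
rewrite msc_prob_run_mean.
have [-> | [BA _]] := sort_perm_pair (@card_leq_total X) AB (internal_edges_pair AB IAB);
  last by move: BA; rewrite A2 B3.
rewrite run_mean_two_clusters ?A2 ?B3 // rate_init_card2 // rate_init_card3 //.
rewrite cherry_count_setT // cherry_count_card3 // cherry_count_card2 // (inj_eq set1_inj).
rewrite -Ropp_mult_distr_l Rmult_1_l Rdiv_1_r.
by set a := exp _; set b := exp _; set q := b2R _; field.
Qed.

End QuartetProbabilities.

Section Identifiability.
Variable X : finType.
Hypothesis X4 : #|X| = 4%N.
Implicit Types (sg : rmtree X) (A B : {set X}).

Lemma internal_clusters_len_pos sg C : valid_rmtree sg ->
  C \in internal_clusters (rtop sg) -> 0 < rlen sg C.
Proof. by case=> _ pos; rewrite inE; apply: pos. Qed.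

Lemma msc_prob_quartet sg : valid_rmtree sg -> exists A L,
  [/\ #|A| = 2%N, 0 < L, unroot (rtop sg) = [set split_of A], ulen sg (split_of A) = L &
      forall A', #|A'| = 2%N -> msc_prob sg [set split_of A'] =
        exp (- L) / 3 + (1 - exp (- L)) * b2R (split_of A == split_of A')].
Proof.
move=> vsg; have [rH _] := vsg; have Ac2 := cardsC2 X4.
case: (rooted_binary_quartet X4 rH) => [[A [B [A2 B3 IAB]]] | [A [A2 IA]]].
- have AB : A != B by apply: contra_eqN A2 => /eqP ->; rewrite B3.
  have Bc1 : #|~: B| = 1%N by have := cardsC B; rewrite X4 B3; lia.
  exists A, (rlen sg A); split => //.
  + by apply: internal_clusters_len_pos; rewrite // IAB !inE eqxx.
  + apply/setP => S; rewrite inE; apply/unrootP/eqP => [[C] | ->].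
      by rewrite IAB !inE => /andP[/orP[] /eqP -> //]; rewrite Bc1.
    by exists A; rewrite // IAB !inE eqxx Ac2.
  + rewrite (ulen_pair _ AB IAB) eqxx split_of_eq !inE.
    have BnD (D : {set X}) : #|D| = 2%N -> (B == D) = false.
      by move=> D2; apply/eqP => BD; move: B3; rewrite BD D2.
    by rewrite !BnD ?Ac2 //= Rplus_0_r.
  + by move=> A' A'2; apply: (msc_prob_caterpillar X4 A2 B3 IAB).
- have AAc := quartet_setC_neq X4 A.
  have IA_mem D : D \in [set A; ~: A] -> D \in internal_clusters (rtop sg) by rewrite IA.
  exists A, (rlen sg A + rlen sg (~: A)); split => //.
  + by apply: Rplus_lt_0_compat; apply: internal_clusters_len_pos => //; apply: IA_mem;
      rewrite !inE eqxx ?orbT.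
  + apply/setP => S; rewrite inE; apply/unrootP/eqP => [[C] | ->].
      by rewrite IA !inE => /andP[/orP[] /eqP -> _ ->]; rewrite ?split_ofC.
    by exists A; rewrite // IA !inE eqxx Ac2.
  + by rewrite (ulen_pair _ AAc IA) split_ofC eqxx.
  + move=> A' A'2; rewrite (msc_prob_balanced X4 _ A2 IA) cherry_count_setT // (inj_eq set1_inj).
    by set e := exp _; set q := b2R _; field.
Qed.

Lemma unrooted_identifiable (s1 s2 : rmtree X) : valid_rmtree s1 -> valid_rmtree s2 ->
  (forall T, msc_prob s1 T = msc_prob s2 T) -> unrooted_eq s1 s2.
Proof.
move=> v1 v2 eqP12.
have [A1 [L1 [A1_2 L1_0 u1 l1 P1]]] := msc_prob_quartet v1.
have [A2 [L2 [A2_2 L2_0 u2 l2 P2]]] := msc_prob_quartet v2.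
have := eqP12 [set split_of A1]; rewrite (P1 _ A1_2) (P2 _ A1_2) eqxx.
have e1 : exp (- L1) < 1 by rewrite -exp_0; apply: exp_increasing; lra.
have e2 : exp (- L2) < 1 by rewrite -exp_0; apply: exp_increasing; lra.
have [/eqP S12 | S12] := boolP (split_of A2 == split_of A1); last first.
  by rewrite /b2R; have := exp_pos (- L1); have := exp_pos (- L2); lra.
rewrite /b2R => e12.
have eL : exp (- L1) = exp (- L2) by lra.
have L12 : L1 = L2 by have := exp_inv _ _ eL; lra.
split; first by rewrite u1 u2 S12.
by move=> S; rewrite u1 inE => /eqP ->; rewrite l1 -S12 l2.
Qed.

End Identifiability.

Section BalancedTree.
Variable X : finType.
Hypothesis X4 : #|X| = 4%N.
Variable A : {set X}.
Hypothesis A2 : #|A| = 2%N.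
Implicit Types (C : {set X}).

Definition balanced_hierarchy : {set {set X}} :=
  [set setT; A; ~: A] :|: [set [set x] | x : X].

Lemma mem_balanced_hierarchy C : (C \in balanced_hierarchy) =
  [|| C == setT, C == A, C == ~: A | C \in [set [set x] | x : X]].
Proof. by rewrite !inE -!orbA. Qed.

Lemma set1_balanced_hierarchy x : [set x] \in balanced_hierarchy.
Proof. by rewrite mem_balanced_hierarchy imset_f ?orbT. Qed.

Lemma card2_balanced_children C : #|C| = 2%N -> exists D1 D2, [/\ D1 \in balanced_hierarchy,
  D2 \in balanced_hierarchy, [disjoint D1 & D2] & D1 :|: D2 = C].
Proof.
move/eqP/cards2P => [x [y [xy ->]]]; exists [set x], [set y].
by split; rewrite ?set1_balanced_hierarchy // disjoints1 inE.
Qed.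

Lemma set1_compatible x C : [|| [set x] \subset C, C \subset [set x] | [disjoint [set x] & C]].
Proof. by rewrite sub1set disjoints1; case: (x \in C); rewrite ?orbT. Qed.

Lemma rooted_binary_balanced : rooted_binary balanced_hierarchy.
Proof.
have Ac2 := cardsC2 X4 A2.
have pos C : C \in balanced_hierarchy -> (0 < #|C|)%N.
  rewrite mem_balanced_hierarchy => /or4P[/eqP -> | /eqP -> | /eqP -> | /imsetP[x _ ->]];
  by rewrite ?cardsT ?X4 ?A2 ?Ac2 ?cards1.
split.
- by rewrite mem_balanced_hierarchy eqxx.
- exact: set1_balanced_hierarchy.
- by apply/negP => /pos; rewrite cards0.
- have sym (D1 D2 : {set X}) : [|| D1 \subset D2, D2 \subset D1 | [disjoint D1 & D2]] ->
      [|| D2 \subset D1, D1 \subset D2 | [disjoint D2 & D1]].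
    by rewrite [[disjoint D2 & D1]]disjoint_sym orbCA.
  move=> D1 D2; rewrite !mem_balanced_hierarchy.
  move=> /or4P[/eqP -> | /eqP -> | /eqP -> | /imsetP[x _ ->]];
    move=> /or4P[/eqP -> | /eqP -> | /eqP -> | /imsetP[y _ ->]];
    rewrite ?subsetT ?subxx ?orbT ?set1_compatible //; try by apply/sym/set1_compatible.
  + by rewrite disjoints_subset setCK subxx !orbT.
  + by rewrite disjoints_subset subxx !orbT.
- move=> C; rewrite mem_balanced_hierarchy => /or4P[/eqP -> | /eqP -> | /eqP -> | /imsetP[x _ ->]].
  + move=> _; exists A, (~: A); rewrite !mem_balanced_hierarchy !eqxx ?orbT setUCr.
    by rewrite disjoints_subset setCK.
  + by move=> _; apply: card2_balanced_children.
  + by move=> _; apply/card2_balanced_children/cardsC2.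
  + by rewrite cards1.
Qed.

End BalancedTree.

Section RootedNonIdentifiability.
Variable X : finType.
Hypothesis X4 : #|X| = 4%N.

Lemma rooted_not_identifiable : exists s1 s2 : rmtree X,
  [/\ valid_rmtree s1, valid_rmtree s2, ~ rmtree_eq s1 s2 &
      forall T, msc_prob s1 T = msc_prob s2 T].
Proof.
have [A] : exists A : {set X}, A \in [set B : {set X} | #|B| == 2%N].
  by apply/set0Pn; rewrite -card_gt0 card_draws X4.
rewrite inE => /eqP A2; set H := balanced_hierarchy A.
have IA : internal_clusters H = [set A; ~: A].
  apply: (balanced_internal_clusters X4 (rooted_binary_balanced X4 A2) _ _ A2);
  by rewrite mem_balanced_hierarchy eqxx ?orbT.
have AcA : (~: A == A) = false by rewrite eq_sym (negbTE (quartet_setC_neq X4 A)).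
pose len (a b : R) C := if C == A then a else b.
have valid a b : 0 < a -> 0 < b -> valid_rmtree (RMTree H (len a b)).
  move=> a0 b0; split; first exact: rooted_binary_balanced.
  by move=> C _; rewrite /len /=; case: ifP.
exists (RMTree H (len 1 2)), (RMTree H (len 2 1)); split; try by apply: valid; lra.
- case=> _ /(_ A); rewrite /len /= eqxx.
  have : A \in internal_clusters H by rewrite IA !inE eqxx.
  by rewrite inE => IHA /(_ IHA); lra.
- move=> T; rewrite (@msc_prob_balanced _ X4 (RMTree H (len 1 2)) _ T A2 IA).
  rewrite (@msc_prob_balanced _ X4 (RMTree H (len 2 1)) _ T A2 IA) /= /len eqxx AcA.
  by rewrite (Rplus_comm 2).
Qed.

End RootedNonIdentifiability.

Local Close Scope R_scope.

Theorem proposition2 (X : finType) (hX : #|X| = 4%N) :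
  (forall s1 s2 : rmtree X, valid_rmtree s1 -> valid_rmtree s2 ->
     (forall T, msc_prob s1 T = msc_prob s2 T) -> unrooted_eq s1 s2) /\
  (exists s1 s2 : rmtree X, [/\ valid_rmtree s1, valid_rmtree s2,
     ~ rmtree_eq s1 s2 & forall T, msc_prob s1 T = msc_prob s2 T]).
Proof. by split; [apply: unrooted_identifiable | apply: rooted_not_identifiable]. Qed.
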